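(* Let $A$ be a sesquiad and $A^{\mathrm{red}}=A/\operatorname{Nil}(A)$. Then $A^{\mathrm{red}}$ is reduced, it is the largest reduced quotient of $A$ (by a congruence), and the projection $A\to A^{\mathrm{red}}$ induces a homeomorphism $\operatorname{spec}_cA^{\mathrm{red}}\to\operatorname{spec}_cA$.
   Context: Monoids are commutative with $1$ and a zero $0$. A sesquiad is a monoid $A$ with an addition: partially defined sums $\sum_jk_ja_j$ coming from an injective monoid morphism $\varphi:A\to R$ into a commutative ring with $\varphi(0)=0$, defined exactly when $\sum_jk_j\varphi(a_j)\in\varphi(A)$. A congruence is an equivalence relation $\mathcal C$ on $A$ such that $A/\mathcal C$ admits an addition making $A\to A/\mathcal C$ a sesquiad morphism; the quotient $A/\mathcal C$ carries the minimal such addition (the one defined by $A/\mathcal C\hookrightarrow R_A/J$, $J$ the ideal of the universal ring $R_A$ generated by $a-b$, $a\sim_{\mathcal C}b$). A congruence is prime if $A/\mathcal C$ is integral ($1\not\sim 0$; $af\sim bf\Rightarrow a\sim b$ or $f\sim0$). $\operatorname{spec}_cA$ is the set of prime congruences with topology generated by $D(a,b)=\{\mathcal C:(a,b)\notin\mathcal C\}$. A sesquiad morphism $\varphi:A\to B$ induces $\varphi^*:\operatorname{spec}_cB\to\operatorname{spec}_cA$, $E\mapsto\{(a,a'):\varphi(a)\sim_E\varphi(a')\}$. $\operatorname{Nil}(A)=\bigcap_{E\in\operatorname{spec}_cA}E$, and $A$ is reduced if $\operatorname{Nil}(A)$ is the diagonal $\Delta$. *)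

From HB Require Import structures.
From mathcomp Require Import all_boot all_order all_algebra.
From Stdlib Require Import ClassicalEpsilon.
Set Implicit Arguments. Unset Strict Implicit. Unset Printing Implicit Defensive.
Import GRing.Theory.
Local Open Scope ring_scope.

(* Operations of a sesquiad on a carrier T: multiplication, 1, 0, and the
   partial addition, given as the relation  ssums l b  meaning that the
   formal sum  \sum_j k_j a_j  (l = [:: (k_1,a_1); ...]) is defined and equals b. *)
Record sesq (T : Type) := Sesq {
  smul : T -> T -> T;
  sone : T;
  szero : T;
  ssums : seq (int * T) -> T -> Prop }.

Definition ring_embedding T (S : sesq T) (R : comPzRingType) (phi : T -> R) : Prop :=
  injective phi /\ phi (sone S) = 1 /\ phi (szero S) = 0 /\
  (forall x y, phi (smul S x y) = phi x * phi y) /\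
  (forall l b, ssums S l b <-> \sum_(p <- l) phi p.2 *~ p.1 = phi b).

Definition is_sesquiad T (S : sesq T) : Prop :=
  exists (R : comPzRingType) (phi : T -> R), ring_embedding S phi.

Definition ring_sesq (R : comPzRingType) : sesq R :=
  @Sesq R (fun x y => x * y) 1 0 (fun l b => \sum_(p <- l) p.2 *~ p.1 = b).

Definition sesq_morph T U (S : sesq T) (S' : sesq U) (f : T -> U) : Prop :=
  f (sone S) = sone S' /\ f (szero S) = szero S' /\
  (forall x y, f (smul S x y) = smul S' (f x) (f y)) /\
  (forall l b, ssums S l b -> ssums S' [seq (p.1, f p.2) | p <- l] (f b)).

Definition qclass T (C : T -> T -> Prop) (P : T -> Prop) : Prop :=
  exists a, forall x, P x <-> C a x.
Definition quot T (C : T -> T -> Prop) : Type := {P : T -> Prop | qclass C P}.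
Definition qproj T (C : T -> T -> Prop) (a : T) : quot C :=
  exist (qclass C) (C a) (ex_intro _ a (fun x => iff_refl (C a x))).
Definition qrep T (C : T -> T -> Prop) (X : quot C) : T :=
  proj1_sig (constructive_indefinite_description _ (proj2_sig X)).
Definition qmul T (S : sesq T) (C : T -> T -> Prop) (X Y : quot C) : quot C :=
  qproj C (smul S (qrep X) (qrep Y)).

(* psi : T -> R is a sesquiad morphism to a ring which identifies C-related elements;
   these are exactly the ring maps out of R_A/J, J generated by a - b, a ~C b. *)
Definition kills T (S : sesq T) (C : T -> T -> Prop) (R : comPzRingType) (psi : T -> R) :=
  sesq_morph S (ring_sesq R) psi /\ (forall a b, C a b -> psi a = psi b).

(* Minimal addition on T/C: the one induced by T/C -> R_A/J, i.e.
   sum_j k_j [a_j] = [b] iff sum_j k_j a_j = b in R_A/J, expressed through the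
   universal property of R_A/J. *)
Definition qsums T (S : sesq T) (C : T -> T -> Prop)
    (l : seq (int * quot C)) (Y : quot C) : Prop :=
  forall (R : comPzRingType) (psi : T -> R), kills S C psi ->
    \sum_(p <- l) psi (qrep p.2) *~ p.1 = psi (qrep Y).

Definition quot_sesq T (S : sesq T) (C : T -> T -> Prop) : sesq (quot C) :=
  @Sesq (quot C) (@qmul T S C) (qproj C (sone S)) (qproj C (szero S)) (@qsums T S C).

Definition is_congruence T (S : sesq T) (C : T -> T -> Prop) : Prop :=
  (forall a, C a a) /\ (forall a b, C a b -> C b a) /\
  (forall a b c, C a b -> C b c -> C a c) /\
  (forall a a' b b', C a a' -> C b b' -> C (smul S a b) (smul S a' b')) /\
  exists sums' : seq (int * quot C) -> quot C -> Prop,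
    is_sesquiad (@Sesq (quot C) (@qmul T S C) (qproj C (sone S)) (qproj C (szero S)) sums')
    /\ sesq_morph S (@Sesq (quot C) (@qmul T S C) (qproj C (sone S)) (qproj C (szero S)) sums')
                  (qproj C).

Definition integral T (S : sesq T) : Prop :=
  sone S <> szero S /\
  forall a b f, smul S a f = smul S b f -> a = b \/ f = szero S.

Definition prime_cong T (S : sesq T) (C : T -> T -> Prop) : Prop :=
  is_congruence S C /\ integral (quot_sesq S C).

Definition NilC T (S : sesq T) : T -> T -> Prop :=
  fun a b => forall E, prime_cong S E -> E a b.
Definition reduced T (S : sesq T) : Prop := forall a b, NilC S a b -> a = b.

Definition spec T (S : sesq T) : Type := {E : T -> T -> Prop | prime_cong S E}.
Definition Dset T (S : sesq T) (a b : T) (E : spec S) : Prop := ~ proj1_sig E a b.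
Definition Dfin T (S : sesq T) (l : seq (T * T)) (E : spec S) : Prop :=
  forall p, List.In p l -> Dset p.1 p.2 E.
Definition spec_open T (S : sesq T) (U : spec S -> Prop) : Prop :=
  forall E, U E -> exists l, Dfin l E /\ forall E', Dfin l E' -> U E'.

Definition comap T U (f : T -> U) (E : U -> U -> Prop) : T -> T -> Prop :=
  fun a a' => E (f a) (f a').
Definition spec_map T U (S : sesq T) (S' : sesq U) (f : T -> U)
    (H : forall E, prime_cong S' E -> prime_cong S (comap f E)) (E : spec S') : spec S :=
  exist (prime_cong S) (comap f (proj1_sig E)) (H _ (proj2_sig E)).

Definition homeomorphism T U (S : sesq T) (S' : sesq U) (g : spec S -> spec S') : Prop :=
  bijective g /\
  (forall V, spec_open V -> spec_open (fun E => V (g E))) /\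
  (forall W, spec_open W -> spec_open (fun E' => exists E, W E /\ g E = E')).

From HB Require Import structures.
From mathcomp Require Import all_boot all_order all_algebra.
From mathcomp Require Import boolp.
From Stdlib Require Import ClassicalEpsilon FunctionalExtensionality PropExtensionality ProofIrrelevance.
Set Implicit Arguments. Unset Strict Implicit. Unset Printing Implicit Defensive.
Import GRing.Theory.
Local Open Scope ring_scope.

(* The whole argument rests on one description of congruences: an equivalence
   C on S is a congruence exactly when it is the kernel of a sesquiad morphism
   from S into a commutative ring (congruence_of_kernel, kernel_of_congruence).
   From this we get:
   - the kernels of a family of morphisms psi_i are jointly the kernel of the
     product morphism into prod_i R_i, so intersections of congruences, and in
     particular Nil(S), are congruences (congruence_bigcap, nil_congruence);
   - integrality of S/C can be read off C (integral_quotP), hence prime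
     congruences pull back along morphisms (prime_comap) and a prime of S
     containing a congruence C descends to S/C (prime_lift).
   Consequently, for C contained in Nil(S), the primes of S/C correspond
   bijectively to those of S; the correspondence is continuous for any induced
   map and open because the projection has the section qrep
   (quot_spec_homeomorphism). Comparing Nil(S/C) with Nil(S) through these two
   transfers shows that S/Nil(S) is reduced and that Nil(S) lies in every
   congruence with reduced quotient. *)

Section ProductRing.
Variables (I : Type) (R : I -> comPzRingType).

Definition dprod : Type := forall i, R i.
HB.instance Definition _ := gen_eqMixin dprod.
HB.instance Definition _ := gen_choiceMixin dprod.

Let dprod_ext (f g : dprod) : (forall i, f i = g i) -> f = g.
Proof. exact: functional_extensionality_dep. Qed.

Let daddA : associative (fun f g : dprod => fun i => f i + g i).
Proof. by move=> f g h; apply: dprod_ext => i; rewrite addrA. Qed.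
Let daddC : commutative (fun f g : dprod => fun i => f i + g i).
Proof. by move=> f g; apply: dprod_ext => i; rewrite addrC. Qed.
Let dadd0 : left_id (fun i => 0 : R i) (fun f g : dprod => fun i => f i + g i).
Proof. by move=> f; apply: dprod_ext => i; rewrite add0r. Qed.
Let daddN : left_inverse (fun i => 0 : R i) (fun (f : dprod) i => - f i)
  (fun f g : dprod => fun i => f i + g i).
Proof. by move=> f; apply: dprod_ext => i; rewrite addNr. Qed.
HB.instance Definition _ := GRing.isZmodule.Build dprod daddA daddC dadd0 daddN.

Let dmulA : associative (fun f g : dprod => fun i => f i * g i).
Proof. by move=> f g h; apply: dprod_ext => i; rewrite mulrA. Qed.
Let dmulC : commutative (fun f g : dprod => fun i => f i * g i).
Proof. by move=> f g; apply: dprod_ext => i; rewrite mulrC. Qed.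
Let dmul1 : left_id (fun i => 1 : R i) (fun f g : dprod => fun i => f i * g i).
Proof. by move=> f; apply: dprod_ext => i; rewrite mul1r. Qed.
Let dmulD : left_distributive (fun f g : dprod => fun i => f i * g i) +%R.
Proof. by move=> f g h; apply: dprod_ext => i; rewrite mulrDl. Qed.
HB.instance Definition _ := GRing.Zmodule_isComPzRing.Build dprod dmulA dmulC dmul1 dmulD.

Definition dproj (i : I) (f : dprod) : R i := f i.
Lemma dproj_is_zmod_morphism i : zmod_morphism (dproj i).
Proof. by []. Qed.
HB.instance Definition _ i :=
  GRing.isZmodMorphism.Build dprod (R i) (dproj i) (dproj_is_zmod_morphism i).

Lemma dprod_sum (l : seq (int * dprod)) i :
  (\sum_(p <- l) p.2 *~ p.1) i = \sum_(p <- l) p.2 i *~ p.1.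
Proof.
rewrite -[LHS]/(dproj i _) raddf_sum; apply: eq_bigr => p _; exact: raddfMz.
Qed.

End ProductRing.

Section Quotient.
Variables (T : Type) (C : T -> T -> Prop).

Definition equiv_rel : Prop :=
  (forall a, C a a) /\ (forall a b, C a b -> C b a) /\
  (forall a b c, C a b -> C b c -> C a c).

Lemma quot_eq (X Y : quot C) : proj1_sig X = proj1_sig Y -> X = Y.
Proof.
by case: X Y => [P HP] [Q HQ] /= PQ; subst Q; rewrite (proof_irrelevance _ HP HQ).
Qed.

Lemma qproj_rep (X : quot C) : qproj C (qrep X) = X.
Proof.
apply: quot_eq; rewrite /qrep; case: (constructive_indefinite_description _ _) => a Ha /=.
by apply: functional_extensionality => x; apply: propositional_extensionality; rewrite Ha.
Qed.

Lemma quot_ind (P : quot C -> Prop) : (forall a, P (qproj C a)) -> forall X, P X.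
Proof. by move=> HP X; rewrite -(qproj_rep X). Qed.

Lemma qrep_proj : (forall a, C a a) -> forall a, C (qrep (qproj C a)) a.
Proof.
move=> Crefl a; rewrite /qrep.
by case: (constructive_indefinite_description _ _) => r /= Hr; exact/Hr/Crefl.
Qed.

Lemma qproj_eq : equiv_rel -> forall a b, qproj C a = qproj C b <-> C a b.
Proof.
move=> [Crefl [Csym Ctrans]] a b; split=> [Eab | Cab].
  by have /= -> := f_equal (@proj1_sig _ _) Eab.
apply: quot_eq => /=; apply: functional_extensionality => x.
by apply: propositional_extensionality; split; eauto.
Qed.

End Quotient.

Lemma spec_eq T (S : sesq T) (E1 E2 : spec S) : proj1_sig E1 = proj1_sig E2 -> E1 = E2.
Proof.
by case: E1 E2 => [P HP] [Q HQ] /= PQ; subst Q; rewrite (proof_irrelevance _ HP HQ).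
Qed.

Section Kernels.
Variables (T : Type) (S : sesq T).
Implicit Types (C : T -> T -> Prop) (R : comPzRingType).

Definition mul_compatible C : Prop :=
  forall a a' b b', C a a' -> C b b' -> C (smul S a b) (smul S a' b').

Definition ring_kernel C R (psi : T -> R) : Prop :=
  sesq_morph S (ring_sesq R) psi /\ forall a b, C a b <-> psi a = psi b.

Lemma congruence_equiv C : is_congruence S C -> equiv_rel C.
Proof. by case=> Crefl [Csym [Ctrans _]]. Qed.

Lemma kernel_equiv C R (psi : T -> R) :
  (forall a b, C a b <-> psi a = psi b) -> equiv_rel C.
Proof.
move=> psi_C; split; [|split].
- by move=> a; apply/psi_C.
- by move=> a b /psi_C Eab; apply/psi_C.
- by move=> a b c /psi_C Eab /psi_C Ebc; apply/psi_C; rewrite Eab.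
Qed.

Lemma qrep_proj_map C U (psi : T -> U) : (forall a, C a a) ->
  (forall a b, C a b -> psi a = psi b) -> forall x, psi (qrep (qproj C x)) = psi x.
Proof. by move=> Crefl psi_C x; apply: psi_C; exact: qrep_proj. Qed.

Lemma morph_sums R (psi : T -> R) l b :
  sesq_morph S (ring_sesq R) psi -> ssums S l b -> \sum_(p <- l) psi p.2 *~ p.1 = psi b.
Proof. by move=> [_ [_ [_ psi_sums]]] /psi_sums /=; rewrite big_map. Qed.

Lemma qmul_proj C : equiv_rel C -> mul_compatible C ->
  forall a b, qproj C (smul S a b) = qmul S (qproj C a) (qproj C b).
Proof.
move=> Ceq Cmul a b; have [Crefl [Csym _]] := Ceq.
by apply/qproj_eq => //; apply: Cmul; apply: Csym; exact: qrep_proj.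
Qed.

Lemma qsums_proj C : (forall a, C a a) -> forall l b, ssums S l b ->
  qsums S [seq (p.1, qproj C p.2) | p <- l] (qproj C b).
Proof.
move=> Crefl l b lb R psi [psi_morph psi_C].
have psi_rep := qrep_proj_map Crefl psi_C.
rewrite big_map psi_rep -(morph_sums psi_morph lb).
by apply: eq_bigr => p _; rewrite psi_rep.
Qed.

Lemma qproj_morph C : is_congruence S C -> sesq_morph S (quot_sesq S C) (qproj C).
Proof.
move=> HC; have Ceq := congruence_equiv HC; have [Crefl _] := Ceq.
split; [|split; [|split]] => //.
  by case: HC => _ [_ [_ [Cmul _]]]; exact: qmul_proj.
exact: qsums_proj.
Qed.

Definition kernel_sums C R (psi : T -> R) (l : seq (int * quot C)) (Y : quot C) : Prop :=
  \sum_(p <- l) psi (qrep p.2) *~ p.1 = psi (qrep Y).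

(* Kernels of morphisms into rings are congruences: psi induces an injective
   morphism from S/C into R, which makes S/C a sesquiad. *)
Lemma congruence_of_kernel C R (psi : T -> R) : ring_kernel C psi -> is_congruence S C.
Proof.
move=> [psi_morph psi_C]; have Ceq := kernel_equiv psi_C.
have [Crefl [Csym Ctrans]] := Ceq; have [psi1 [psi0 [psi_mul _]]] := psi_morph.
have psi_rep := qrep_proj_map Crefl (fun a b => (psi_C a b).1).
have Cmul : mul_compatible C.
  by move=> a a' b b' /psi_C Ea /psi_C Eb; apply/psi_C; rewrite !psi_mul /= Ea Eb.
do 4 (split => //); exists (kernel_sums psi); split.
- exists R, (fun X => psi (qrep X)).
  split; [|split; [|split; [|split]]] => //=; try by rewrite psi_rep.
  + by elim/quot_ind => a; elim/quot_ind => b; rewrite !psi_rep => /psi_C /(qproj_eq Ceq).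
  + by elim/quot_ind => a; elim/quot_ind => b; rewrite /qmul psi_rep psi_mul.
- split; [|split; [|split]] => //; first exact: qmul_proj.
  move=> l b lb; rewrite /kernel_sums /= big_map psi_rep -(morph_sums psi_morph lb).
  by apply: eq_bigr => p _; rewrite psi_rep.
Qed.

(* Conversely every congruence is such a kernel: compose the projection with
   an embedding of the sesquiad S/C into a ring. *)
Lemma kernel_of_congruence C : is_congruence S C ->
  exists R (psi : T -> R), ring_kernel C psi.
Proof.
move=> HC; have Ceq := congruence_equiv HC.
case: HC => _ [_ [_ [_ [sums [[R [phi [phi_inj [phi1 [phi0 [phi_mul phi_sums]]]]]]]
  [_ [_ [q_mul q_sums]]]]]]].
exists R, (fun a => phi (qproj C a)); split.
- split; [|split; [|split]] => //=.
  + by move=> x y; rewrite q_mul phi_mul.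
  + by move=> l b /q_sums /phi_sums sumE; rewrite big_map -sumE big_map.
- by move=> a b; rewrite -(qproj_eq Ceq); split=> [-> | /phi_inj].
Qed.

End Kernels.

Lemma quot_factor T (S : sesq T) C (R : comPzRingType) (psi : T -> R) :
  (forall a, C a a) -> kills S C psi ->
  sesq_morph (quot_sesq S C) (ring_sesq R) (fun X => psi (qrep X)).
Proof.
move=> Crefl kill_psi; have [[psi1 [psi0 [psi_mul _]]] psi_C] := kill_psi.
have psi_rep := qrep_proj_map Crefl psi_C.
split; [|split; [|split]] => /=; rewrite ?psi_rep //.
- by move=> X Y; rewrite /qmul psi_rep psi_mul.
- by move=> l Y /(_ R psi kill_psi); rewrite big_map.
Qed.

Lemma integral_quotP T (S : sesq T) C : is_congruence S C ->
  integral (quot_sesq S C) <->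
  ~ C (sone S) (szero S) /\
  forall a b f, C (smul S a f) (smul S b f) -> C a b \/ C f (szero S).
Proof.
move=> HC; have Ceq := congruence_equiv HC; have Cproj := qproj_eq Ceq.
have Cmul : forall a b, qproj C (smul S a b) = qmul S (qproj C a) (qproj C b).
  by case: HC => _ [_ [_ [Cmul _]]]; exact: qmul_proj.
split=> [[one_neq0 cancel] | [one_nC cancelC]]; split.
- by move=> /Cproj /one_neq0.
- by move=> a b f /Cproj; rewrite !Cmul => /cancel [] /Cproj; [left | right].
- by move=> /Cproj /one_nC.
- elim/quot_ind => a; elim/quot_ind => b; elim/quot_ind => f /=.
  by rewrite -!Cmul => /Cproj /cancelC [] /Cproj; [left | right].
Qed.

(* Any intersection of congruences is a congruence: it is the kernel of the
   product of the ring morphisms whose kernels are the given congruences. *)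
Lemma congruence_bigcap T (S : sesq T) (I : Type) (C : I -> T -> T -> Prop) :
  (forall i, is_congruence S (C i)) -> is_congruence S (fun a b => forall i, C i a b).
Proof.
move=> HC.
have kerC i : {R : comPzRingType & {psi : T -> R | ring_kernel S (C i) psi}}.
  have /constructive_indefinite_description [R /constructive_indefinite_description ker]
    := kernel_of_congruence (HC i).
  by exists R.
pose psi i := proj1_sig (projT2 (kerC i)).
have psiP i : ring_kernel S (C i) (psi i) := proj2_sig (projT2 (kerC i)).
apply: (@congruence_of_kernel _ _ _ (dprod (fun i => projT1 (kerC i)))
  (fun a i => psi i a)); split.
- split; [|split; [|split]] => [| | x y | l b lb];
    apply: functional_extensionality_dep => i; have [[psi1 [psi0 [psi_mul _]]] _] := psiP i.
  + exact: psi1.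
  + exact: psi0.
  + exact: psi_mul.
  + by rewrite /= dprod_sum big_map; exact: (morph_sums (psiP i).1).
- move=> a b; split=> [Cab | Eab i].
  + by apply: functional_extensionality_dep => i; apply/(psiP i).2.
  + by apply/(psiP i).2; exact: (congr1 (fun f => f i) Eab).
Qed.

Lemma congruence_comap T U (S : sesq T) (S' : sesq U) (f : T -> U) E :
  sesq_morph S S' f -> is_congruence S' E -> is_congruence S (comap f E).
Proof.
move=> [f1 [f0 [f_mul f_sums]]] /kernel_of_congruence [R [psi [psi_morph psi_E]]].
have [psi1 [psi0 [psi_mul psi_sums]]] := psi_morph.
apply: (@congruence_of_kernel _ _ _ R (fun a => psi (f a)));
  split; last by move=> a b; exact: psi_E.
split; [|split; [|split]] => /=; rewrite ?f1 ?f0 //.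
- by move=> x y; rewrite f_mul psi_mul.
- by move=> l b /f_sums /psi_sums /= sumE; rewrite big_map -sumE !big_map.
Qed.

Lemma prime_comap T U (S : sesq T) (S' : sesq U) (f : T -> U) E :
  sesq_morph S S' f -> prime_cong S' E -> prime_cong S (comap f E).
Proof.
move=> f_morph [HE HEint]; have HfE := congruence_comap f_morph HE.
have [f1 [f0 [f_mul _]]] := f_morph.
split=> //; apply/(integral_quotP HfE).
have [E1 Ecancel] := (integral_quotP HE).1 HEint.
by split; rewrite /comap ?f1 ?f0 // => a b c; rewrite !f_mul; exact: Ecancel.
Qed.

Lemma prime_lift T (S : sesq T) C E : is_congruence S C ->
  (forall a b, C a b -> E a b) -> prime_cong S E ->
  prime_cong (quot_sesq S C) (comap (@qrep T C) E).
Proof.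
move=> HC CE [HE HEint]; have [Crefl _] := congruence_equiv HC.
have [R [psi [psi_morph psi_E]]] := kernel_of_congruence HE.
have psi_rep := qrep_proj_map Crefl (fun a b Cab => (psi_E a b).1 (CE a b Cab)).
have HEq : is_congruence (quot_sesq S C) (comap (@qrep T C) E).
  apply: (congruence_of_kernel (psi := fun X => psi (qrep X)));
    split; last by move=> X Y; exact: psi_E.
  apply: quot_factor => //; split=> // a b Cab; exact/psi_E/CE.
split=> //; apply/(integral_quotP HEq).
have [E1 Ecancel] := (integral_quotP HE).1 HEint.
rewrite /comap /= /qmul; split; first by rewrite psi_E !psi_rep -psi_E.
move=> X Y F; rewrite psi_E !psi_rep -psi_E => /Ecancel [XY | F0]; first by left.
by right; rewrite psi_E psi_rep -psi_E.
Qed.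

Lemma nil_congruence T (S : sesq T) : is_congruence S (NilC S).
Proof.
have -> : NilC S = fun a b => forall E : spec S, proj1_sig E a b.
  apply: functional_extensionality => a; apply: functional_extensionality => b.
  apply: propositional_extensionality; split=> [Nab E | Eab E HE].
    exact: Nab (proj2_sig E).
  exact: (Eab (exist _ E HE)).
by apply: congruence_bigcap => E; case: (proj2_sig E).
Qed.

(* The projection S -> S/C maps Nil(S) into Nil(S/C), since primes of S/C
   pull back to primes of S ... *)
Lemma nil_quot_proj T (S : sesq T) C : is_congruence S C ->
  forall a b, NilC S a b -> NilC (quot_sesq S C) (qproj C a) (qproj C b).
Proof. by move=> HC a b Nab E' HE'; exact: Nab _ (prime_comap (qproj_morph HC) HE'). Qed.

(* ... and, when C is contained in Nil(S), representatives map Nil(S/C) into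
   Nil(S), since then every prime of S descends to S/C. *)
Lemma nil_quot_rep T (S : sesq T) C : is_congruence S C ->
  (forall a b, C a b -> NilC S a b) ->
  forall X Y, NilC (quot_sesq S C) X Y -> NilC S (qrep X) (qrep Y).
Proof.
move=> HC C_nil X Y NXY E HE.
exact: NXY _ (prime_lift HC (fun a b Cab => C_nil a b Cab E HE) HE).
Qed.

Lemma Dfin_map T (S : sesq T) U (h : U -> T) (l : seq (U * U)) (E : spec S) :
  Dfin [seq (h p.1, h p.2) | p <- l] E <->
  forall p, List.In p l -> Dset (h p.1) (h p.2) E.
Proof.
split=> [Hl p lp | Hl q /List.in_map_iff [p [<- lp]]]; last exact: Hl.
by apply: (Hl (h p.1, h p.2)); apply/List.in_map_iff; exists p.
Qed.

(* The map induced on spectra is always continuous: the preimage of D(a,b)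
   is D(f a, f b). *)
Lemma spec_map_continuous T U (S : sesq T) (S' : sesq U) (f : T -> U) H
    (V : spec S -> Prop) :
  spec_open V -> spec_open (fun E => V (@spec_map T U S S' f H E)).
Proof.
move=> HV E /HV [l [El Vl]]; exists [seq (f p.1, f p.2) | p <- l].
by split=> [|E' /Dfin_map E'l]; [exact/Dfin_map | exact: Vl].
Qed.

(* If the induced map is onto and f has a right inverse s, it is also open:
   the image of the basic set D_l is D_(s l). *)
Lemma spec_map_open T U (S : sesq T) (S' : sesq U) (f : T -> U) (s : U -> T) H
    (W : spec S' -> Prop) :
  cancel s f -> (forall E, exists E', @spec_map T U S S' f H E' = E) ->
  spec_open W -> spec_open (fun E => exists E', W E' /\ spec_map H E' = E).
Proof.
move=> sK map_onto HW _ [E' [WE' <-]]; have [l [E'l Wl]] := HW _ WE'.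
exists [seq (s p.1, s p.2) | p <- l]; split.
  by apply/Dfin_map => p lp; rewrite /Dset /= /comap !sK; exact: E'l.
move=> E; have [E0 <-] := map_onto E; move=> /Dfin_map E0l; exists E0; split=> //.
by apply: Wl => p /E0l; rewrite /Dset /= /comap !sK.
Qed.

Section QuotientSpectrum.
Variables (T : Type) (S : sesq T) (C : T -> T -> Prop).
Hypotheses (HC : is_congruence S C) (C_nil : forall a b, C a b -> NilC S a b).

Let C_prime (E : spec S) a b : C a b -> proj1_sig E a b.
Proof. by move=> Cab; exact: C_nil Cab _ (proj2_sig E). Qed.

Definition spec_lift (E : spec S) : spec (quot_sesq S C) :=
  exist _ (comap (@qrep T C) (proj1_sig E)) (prime_lift HC (@C_prime E) (proj2_sig E)).

Variable H : forall E, prime_cong (quot_sesq S C) E -> prime_cong S (comap (qproj C) E).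

(* Restricting a descended prime back to S recovers it, as E contains C ... *)
Lemma spec_map_lift (E : spec S) : spec_map H (spec_lift E) = E.
Proof.
have [Crefl _] := congruence_equiv HC.
have [R [psi [_ psi_E]]] := kernel_of_congruence (proj1 (proj2_sig E)).
have psi_rep := qrep_proj_map Crefl (fun a b Cab => (psi_E a b).1 (C_prime E Cab)).
apply: spec_eq; apply: functional_extensionality => a.
apply: functional_extensionality => b; apply: propositional_extensionality.
by rewrite /= /comap !psi_E !psi_rep.
Qed.

(* ... and descending a pulled-back prime recovers it, as qrep is a section. *)
Lemma spec_lift_map (E : spec (quot_sesq S C)) : spec_lift (spec_map H E) = E.
Proof.
apply: spec_eq; apply: functional_extensionality => X.
by apply: functional_extensionality => Y; rewrite /= /comap !qproj_rep.
Qed.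

Lemma quot_spec_homeomorphism : homeomorphism (spec_map H).
Proof.
split; first by exists spec_lift; [exact: spec_lift_map | exact: spec_map_lift].
split=> [V | W]; first exact: spec_map_continuous.
apply: (spec_map_open (s := @qrep T C)); first exact: qproj_rep.
by move=> E; exists (spec_lift E); exact: spec_map_lift.
Qed.

End QuotientSpectrum.

Theorem lemma2p2p4 (T : Type) (S : sesq T) (HS : is_sesquiad S) :
  is_congruence S (NilC S) /\
  reduced (quot_sesq S (NilC S)) /\
  (forall C, is_congruence S C -> reduced (quot_sesq S C) ->
     forall a b, NilC S a b -> C a b) /\
  exists H : (forall E, prime_cong (quot_sesq S (NilC S)) E ->
                        prime_cong S (comap (qproj (NilC S)) E)),
    homeomorphism (spec_map H).
Proof.
have HN := nil_congruence S; have Nproj := qproj_eq (congruence_equiv HN).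
split; [exact: HN | split; [|split]].
-
  move=> X Y /(nil_quot_rep HN (fun a b Nab => Nab)) /Nproj.
  by rewrite !qproj_rep.
-
  move=> C HC Cred a b /(nil_quot_proj HC) /Cred.
  by move/(qproj_eq (congruence_equiv HC)).
-
  exists (fun E HE => prime_comap (qproj_morph HN) HE).
  exact: quot_spec_homeomorphism (fun a b Nab => Nab) _.
Qed.
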